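(* Let $\Gamma$ be a metrized graph with $v$ vertices. If $v=2$ then $Kf(\Gamma)=y(\Gamma)$; if $v=3$ then $Kf(\Gamma)=2y(\Gamma)$.
   Context: A metrized graph $\Gamma$ is a finite connected graph (multiple edges and self-loops allowed) each of whose edges is identified with a closed segment of positive length, with a finite nonempty vertex set $V(\Gamma)$ containing every point of valence $\neq2$; $v=\#V(\Gamma)$, $L_i$ the length of $e_i$, $r$ the effective resistance (edges as resistors of resistance equal to length). $Kf(\Gamma)=\frac12\sum_{p,q\in V(\Gamma)}r(p,q)$. For an edge $e_i$ with end points $p_i,q_i$: if $\Gamma-e_i$ (interior deleted) is connected, $R_i$ is the effective resistance between $p_i,q_i$ in $\Gamma-e_i$, $R_{a_i,p}=\hat j_{p_i}(p,q_i)$, $R_{b_i,p}=\hat j_{q_i}(p,p_i)$ with $\hat j_z(x,y)$ the voltage function of $\Gamma-e_i$ (potential at $x$ when unit current enters at $y$ and exits at $z$, potential $0$ at $z$); if $e_i$ is a bridge, $R_{a_i,p}=0,R_{b_i,p}=R_i$ for $p$ in the component of $\Gamma-e_i$ containing $p_i$ and $R_{a_i,p}=R_i,R_{b_i,p}=0$ otherwise, with every expression in $R_i$ interpreted as its limit as $R_i\to\infty$; for a self-loop $R_i=0$. For a fixed vertex $p$ (independent of choice), $y(\Gamma)=\frac14\sum_{e_i}\frac{L_iR_i^2}{(L_i+R_i)^2}+\frac34\sum_{e_i}\frac{L_i(R_{a_i,p}-R_{b_i,p})^2}{(L_i+R_i)^2}$. *)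

(* A metrized graph is modelled combinatorially: a finite
   vertex type V, a finite edge type E, endpoint maps ep1 ep2 : E -> V
   (ep1 e = ep2 e is a self-loop, parallel edges allowed) and positive edge
   lengths L : E -> R.  Subgraphs Gamma - e are given by the edge subset
   S : {set E}. *)
From HB Require Import structures.
From mathcomp Require Import all_boot all_order all_algebra.
From Stdlib Require Import ClassicalEpsilon.
Set Implicit Arguments. Unset Strict Implicit. Unset Printing Implicit Defensive.
Import Order.TTheory GRing.Theory Num.Theory.
Local Open Scope ring_scope.

Section MetrizedGraph.
Variables (R : realFieldType) (V E : finType) (ep1 ep2 : E -> V) (L : E -> R).

Definition adj (S : {set E}) : rel V :=
  [rel a b | [exists e, (e \in S) &&
     (((ep1 e == a) && (ep2 e == b)) || ((ep2 e == a) && (ep1 e == b)))]].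

Definition connectedb (S : {set E}) : bool :=
  [forall a, [forall b, connect (adj S) a b]].

(* f is the potential in the resistive network with edge set S (resistance
   of edge e = L e) when unit current enters at y and exits at z, grounded
   at z: f z = 0 and (net outgoing current at w) = [w = y] - [w = z]. *)
Definition is_potential (S : {set E}) (z y : V) (f : V -> R) : Prop :=
  f z = 0 /\
  forall w : V,
    \sum_(e in S | ep1 e == w) (f w - f (ep2 e)) / L e
  + \sum_(e in S | ep2 e == w) (f w - f (ep1 e)) / L e
  = (w == y)%:R - (w == z)%:R.

(* voltage function  hat j_z(x, y)  of the network with edge set S
   (the potential above, chosen by classical description; it is unique when
   the network is connected) *)
Definition jhat (S : {set E}) (z x y : V) : R :=
  (epsilon (inhabits (fun _ : V => 0 : R)) (is_potential S z y)) x.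

Definition reff (S : {set E}) (x y : V) : R := jhat S y x x.

Definition Kf : R := 2^-1 * \sum_(p : V) \sum_(q : V) reff setT p q.

Definition minus_edge (e : E) : {set E} := ~: [set e].

Definition Ri (e : E) : R := reff (minus_edge e) (ep1 e) (ep2 e).
Definition Rai (e : E) (p : V) : R := jhat (minus_edge e) (ep1 e) p (ep2 e).
Definition Rbi (e : E) (p : V) : R := jhat (minus_edge e) (ep2 e) p (ep1 e).

(* summands of y(Gamma); for a bridge the value is the limit R_i -> +oo of
   the expression (with R_a = 0, R_b = R_i or R_a = R_i, R_b = 0), which is
   L_i in both summands. *)
Definition yterm1 (e : E) : R :=
  if connectedb (minus_edge e) then L e * Ri e ^+ 2 / (L e + Ri e) ^+ 2
  else L e.

Definition yterm2 (e : E) (p : V) : R :=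
  if connectedb (minus_edge e)
  then L e * (Rai e p - Rbi e p) ^+ 2 / (L e + Ri e) ^+ 2
  else L e.

Definition yG (p : V) : R :=
  4^-1 * \sum_(e : E) yterm1 e + (3 / 4) * \sum_(e : E) yterm2 e p.

End MetrizedGraph.

(* If Gamma - e is connected,
   rescaling its potential by L_e/(L_e+R_e) gives the potential of Gamma, whence
   r(p_e,q_e) = L_e R_e/(L_e+R_e) and r(p,p_e) - r(p,q_e) = L_e (R_a - R_b)/(L_e+R_e); if e is
   a bridge, the potential of Gamma is 0 on one side of e and L_e on the other.  Either way
     y(Gamma) = 1/4 sum_e r(p_e,q_e)^2/L_e + 3/4 sum_e (r(p,p_e) - r(p,q_e))^2/L_e
   for every metrized graph.  With two or three vertices the resistances are explicit rational
   functions of the pairwise conductances c_uv (r = 1/c_xy, resp. r(x,y) = (c_xw + c_yw)/D with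
   D = c_xy c_xw + c_xy c_yw + c_xw c_yw), and the claim becomes an identity of rational
   functions.  Potentials are unique on a connected network because a harmonic function has
   zero energy, and they exist by rank-nullity: the kernel of the Laplacian consists of the
   constants, so its image is the hyperplane of current vectors with total 0. *)
From HB Require Import structures.
From mathcomp Require Import all_boot all_order all_algebra.
From mathcomp Require Import ring lra zify.
From Stdlib Require Import ClassicalEpsilon.
Set Implicit Arguments. Unset Strict Implicit. Unset Printing Implicit Defensive.
Import Order.TTheory GRing.Theory Num.Theory.
Local Open Scope ring_scope.

Section Network.
Variables (R : realFieldType) (V E : finType) (ep1 ep2 : E -> V) (L : E -> R).
Hypothesis L_gt0 : forall e, 0 < L e.

Local Notation connectedb := (connectedb ep1 ep2).
Local Notation adj := (adj ep1 ep2).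
Local Notation is_potential := (is_potential ep1 ep2 L).
Local Notation jhat := (jhat ep1 ep2 L).
Local Notation reff := (reff ep1 ep2 L).

Definition net_current (S : {set E}) (f : V -> R) (w : V) : R :=
  \sum_(e in S | ep1 e == w) (f w - f (ep2 e)) / L e
  + \sum_(e in S | ep2 e == w) (f w - f (ep1 e)) / L e.

Lemma is_potentialE S z y f : is_potential S z y f <->
  f z = 0 /\ forall w, net_current S f w = (w == y)%:R - (w == z)%:R.
Proof. by []. Qed.

Lemma green_identity S f g : \sum_w f w * net_current S g w =
  \sum_(e in S) (f (ep1 e) - f (ep2 e)) * (g (ep1 e) - g (ep2 e)) / L e.
Proof.
have push_end (h h' : E -> V) : \sum_w f w * \sum_(e in S | h e == w) (g w - g (h' e)) / L e
    = \sum_(e in S) f (h e) * ((g (h e) - g (h' e)) / L e).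
  rewrite (partition_big h xpredT) //=; apply: eq_bigr => w _.
  by rewrite big_distrr; apply: eq_bigr => e /andP[_ /eqP ->].
under eq_bigr do rewrite mulrDr.
rewrite big_split /= !push_end -big_split /=; apply: eq_bigr => e _.
by rewrite !mulrA -mulrDl; congr (_ * _); ring.
Qed.

Lemma green_reciprocity S f g :
  \sum_w f w * net_current S g w = \sum_w g w * net_current S f w.
Proof. by rewrite !green_identity; apply: eq_bigr => e _; rewrite (mulrC (f _ - _)). Qed.

Lemma potential_pairing S z y f g : is_potential S z y f ->
  \sum_w g w * net_current S f w = g y - g z.
Proof.
case/is_potentialE => _ fcur; under eq_bigr do rewrite fcur mulrBr.
have pick x : \sum_w g w * (w == x)%:R = g x.
  by rewrite (bigD1 x) //= big1 ?eqxx ?mulr1 ?addr0 // => w /negbTE ->; rewrite mulr0.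
by rewrite sumrB !pick.
Qed.

Lemma sum_net_current S g : \sum_w net_current S g w = 0.
Proof.
have := green_identity S (fun=> 1) g; under eq_bigr do rewrite mul1r.
by move=> ->; rewrite big1 // => e _; rewrite subrr !mul0r.
Qed.

Lemma eq_net_current S f g : f =1 g -> net_current S f =1 net_current S g.
Proof. by move=> fg w; rewrite /net_current; congr (_ + _); apply: eq_bigr => e _; rewrite !fg. Qed.

Lemma net_currentB S f g w :
  net_current S (fun v => f v - g v) w = net_current S f w - net_current S g w.
Proof.
rewrite /net_current opprD addrACA -!sumrB.
by congr (_ + _); apply: eq_bigr => e _; ring.
Qed.

Lemma net_currentD S f g w :
  net_current S (fun v => f v + g v) w = net_current S f w + net_current S g w.
Proof.
rewrite /net_current addrACA -!big_split.
by congr (_ + _); apply: eq_bigr => e _ /=; ring.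
Qed.

Lemma net_currentZ S a f w : net_current S (fun v => a * f v) w = a * net_current S f w.
Proof.
rewrite /net_current mulrDr !mulr_sumr.
by congr (_ + _); apply: eq_bigr => e _; ring.
Qed.

Lemma net_current_flat (S : {set E}) f : {in S, forall e, f (ep1 e) = f (ep2 e)} ->
  forall w, net_current S f w = 0.
Proof.
move=> flat w; rewrite /net_current !big1 ?addr0 // => e /andP[eS /eqP <-];
by rewrite (flat e eS) subrr mul0r.
Qed.

Lemma L_neq0 e : L e != 0. Proof. by rewrite gt_eqF. Qed.

Lemma energy_ge0 S f : 0 <= \sum_w f w * net_current S f w.
Proof.
rewrite green_identity; apply: sumr_ge0 => e _.
by rewrite -expr2 divr_ge0 ?sqr_ge0 ?ltW.
Qed.

Lemma harmonic_const S h : connectedb S ->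
  (forall w, net_current S h w = 0) -> forall x y, h x = h y.
Proof.
move=> Sconn h0.
have flat e : e \in S -> h (ep1 e) = h (ep2 e).
  move=> eS; have energy0 : \sum_(e in S) (h (ep1 e) - h (ep2 e)) ^+ 2 / L e = 0.
    under eq_bigr do rewrite expr2.
    by rewrite -green_identity big1 // => w _; rewrite h0 mulr0.
  have terms_ge0 i : i \in S -> 0 <= (h (ep1 i) - h (ep2 i)) ^+ 2 / L i.
    by rewrite divr_ge0 ?sqr_ge0 ?ltW.
  move/eqP: (psumr_eq0P terms_ge0 energy0 eS).
  by rewrite mulf_eq0 invr_eq0 (negbTE (L_neq0 e)) orbF sqrf_eq0 subr_eq0 => /eqP.
move=> x y; have hx_closed : closed (adj S) [pred v | h v == h x].
  move=> u v /existsP[e /andP[eS /orP[]/andP[/eqP <- /eqP <-]]];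
  by rewrite !inE (flat e eS).
move/forallP: Sconn => /(_ x)/forallP/(_ y) xy.
by have := closed_connect hx_closed xy; rewrite !inE eqxx => /esym/eqP.
Qed.

Lemma potential_unique S z y f g : connectedb S ->
  is_potential S z y f -> is_potential S z y g -> f =1 g.
Proof.
move=> Sconn /is_potentialE[fz fcur] /is_potentialE[gz gcur] x.
apply/eqP; rewrite -subr_eq0; apply/eqP.
have diff0 w : net_current S (fun v => f v - g v) w = 0.
  by rewrite net_currentB fcur gcur subrr.
by rewrite (harmonic_const Sconn diff0 x z) fz gz subrr.
Qed.

Lemma sum_indicator (x : V) : \sum_w (w == x)%:R = 1 :> R.
Proof. by rewrite (bigD1 x) //= big1 ?eqxx ?addr0 // => w /negbTE ->. Qed.

Definition laplacian S (f : {ffun V -> R^o}) : {ffun V -> R^o} :=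
  [ffun w => net_current S f w].

Lemma laplacian_linear S : linear (laplacian S).
Proof.
move=> a u v; apply/ffunP => w; rewrite !ffunE.
rewrite (@eq_net_current S _ (fun x => a * u x + v x)) => [|x]; last by rewrite !ffunE.
by rewrite net_currentD net_currentZ.
Qed.

HB.instance Definition _ S :=
  GRing.isLinear.Build R _ _ _ (laplacian S) (laplacian_linear S).

Definition total (f : {ffun V -> R^o}) : R^o := \sum_w f w.

Lemma total_linear : linear total.
Proof.
move=> a u v; rewrite /total scaler_sumr -big_split /=.
by apply: eq_bigr => w _; rewrite !ffunE.
Qed.

HB.instance Definition _ := GRing.isLinear.Build R _ _ _ total total_linear.

(* [v0] only witnesses that [V] is nonempty. *)
Lemma laplacian_image S (v0 : V) : connectedb S ->
  limg (linfun (laplacian S)) = lker (linfun total).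
Proof.
move=> Sconn.
have img_sub : (limg (linfun (laplacian S)) <= lker (linfun total))%VS.
  apply/subvP => _ /memv_imgP[u _ ->]; rewrite memv_ker !lfunE /= /total.
  by under eq_bigr do rewrite ffunE; rewrite sum_net_current.
have ker_le1 : (\dim (lker (linfun (laplacian S))) <= 1)%N.
  have ker_sub : (lker (linfun (laplacian S)) <= <[[ffun=> 1 : R^o]]>)%VS.
    apply/subvP => u; rewrite memv_ker lfunE /= => /eqP lap_u0; apply/vlineP; exists (u v0).
    apply/ffunP => x; rewrite !ffunE; change (u x = u v0 * 1); rewrite mulr1.
    apply: (harmonic_const Sconn) => w.
    by have := congr1 (fun g : {ffun V -> R^o} => g w) lap_u0; rewrite !ffunE.
  by apply: leq_trans (dimvS ker_sub) _; rewrite dim_vline leq_b1.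
have img_total_ge1 : (1 <= \dim (limg (linfun total)))%N.
  pose d : {ffun V -> R^o} := [ffun w => (w == v0)%:R].
  have total_d : linfun total d = 1.
    by rewrite lfunE /= /total -(sum_indicator v0); apply: eq_bigr => w _; rewrite ffunE.
  have d_img : (<[linfun total d]> <= limg (linfun total))%VS.
    by rewrite -memvE; apply: memv_img; apply: memvf.
  by have := dimvS d_img; rewrite dim_vline total_d oner_neq0.
have : (\dim (lker (linfun total)) <= \dim (limg (linfun (laplacian S))))%N.
  move: (limg_ker_dim (linfun (laplacian S)) fullv) (limg_ker_dim (linfun total) fullv).
  by rewrite !capfv; lia.
by move=> dim_le; apply/eqP; rewrite eqEdim img_sub.
Qed.

Lemma potential_exists S z y : connectedb S -> exists f, is_potential S z y f.
Proof.
move=> Sconn.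
have : [ffun w => (w == y)%:R - (w == z)%:R : R^o] \in limg (linfun (laplacian S)).
  rewrite (laplacian_image z Sconn) memv_ker lfunE /= /total.
  by under eq_bigr do rewrite ffunE; rewrite sumrB !sum_indicator subrr.
case/memv_imgP => u _ /ffunP source_u.
exists (fun v => u v - u z); apply/is_potentialE; split=> [|w]; first by rewrite subrr.
have := source_u w; rewrite lfunE !ffunE /= => ->.
by rewrite (net_currentB S u (fun=> u z)) (net_current_flat (f := fun=> u z)) ?subr0.
Qed.

Section Connected.
Variable S : {set E}.
Hypothesis S_conn : connectedb S.

Lemma jhat_potential z y : is_potential S z y (jhat S z ^~ y).
Proof. exact: epsilon_spec (potential_exists z y S_conn). Qed.

Lemma jhatE z y f : is_potential S z y f -> forall x, jhat S z x y = f x.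
Proof. exact: potential_unique (jhat_potential z y). Qed.

Lemma jhat_ground z y : jhat S z z y = 0.
Proof. by case/is_potentialE: (jhat_potential z y). Qed.

Lemma jhat_current z y w :
  net_current S (jhat S z ^~ y) w = (w == y)%:R - (w == z)%:R.
Proof. by case/is_potentialE: (jhat_potential z y). Qed.

Lemma jhatC z x y : jhat S z x y = jhat S z y x.
Proof.
have := green_reciprocity S (jhat S z ^~ y) (jhat S z ^~ x).
by rewrite !(potential_pairing _ (jhat_potential _ _)) !jhat_ground !subr0.
Qed.

Lemma jhat_superposition z x y v :
  jhat S z v y - jhat S z v x = jhat S x v y - jhat S x z y.
Proof.
pose h u := (jhat S z u y - jhat S z u x) - jhat S x u y.
have h_harmonic w : net_current S h w = 0.
  by rewrite !net_currentB !jhat_current; ring.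
have := harmonic_const S_conn h_harmonic v z.
by rewrite /h !jhat_ground; lra.
Qed.

Lemma jhat_self z v : jhat S z v z = 0.
Proof. by have := jhat_superposition z z v v; rewrite jhat_ground; lra. Qed.

Lemma reff_self x : reff S x x = 0.
Proof. exact: jhat_self. Qed.

Lemma jhat_swap_reff x y v : jhat S x v y + jhat S y v x = reff S y x.
Proof. by have := jhat_superposition y x y v; rewrite /reff jhat_self; lra. Qed.

Lemma reffC x y : reff S x y = reff S y x.
Proof. by have := jhat_swap_reff x y x; rewrite jhat_ground add0r. Qed.

Lemma jhat_reff z x y : 2 * jhat S z x y = reff S x z + reff S y z - reff S x y.
Proof.
have := jhat_superposition z y x x; have := jhat_superposition z y x y.
by rewrite /reff (jhatC z x y) jhat_ground; lra.
Qed.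

Lemma reff_ge0 x y : 0 <= reff S x y.
Proof.
have := energy_ge0 S (jhat S y ^~ x).
by rewrite (potential_pairing _ (jhat_potential _ _)) jhat_ground subr0.
Qed.

End Connected.

Lemma adj_sym S : symmetric (adj S).
Proof.
move=> u v; apply/existsP/existsP => -[e He]; exists e;
by case/andP: He => -> /orP[]/andP[-> ->]; rewrite ?orbT.
Qed.

Section AddEdge.
Variable e : E.
Local Notation p := (ep1 e).
Local Notation q := (ep2 e).
Local Notation S' := (minus_edge e).

Lemma net_current_add_edge f w : net_current setT f w = net_current S' f w
  + ((p == w)%:R * (f w - f q) + (q == w)%:R * (f w - f p)) / L e.
Proof.
have split_e (P : pred E) (F : E -> R) :
    \sum_(i in setT | P i) F i = \sum_(i in S' | P i) F i + (P e)%:R * F e.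
  case: (boolP (P e)) => Pe; last first.
    rewrite mul0r addr0; apply: eq_bigl => i; rewrite !inE.
    by case: eqVneq => // ->; rewrite (negbTE Pe).
  rewrite (bigD1 e) ?inE //= mul1r addrC; congr (_ + _); apply: eq_bigl => i.
  by rewrite !inE andbC.
by rewrite /net_current !split_e /=; ring.
Qed.

Lemma connected_minus_edge : connectedb setT -> connect (adj S') p q -> connectedb S'.
Proof.
move=> G_conn pq; apply/forallP => u; apply/forallP => v.
have S'sym : connect_sym (adj S') := sym_connect_sym (@adj_sym S').
have closedC : closed (adj setT) [pred x | connect (adj S') u x].
  apply: intro_closed; first exact: sym_connect_sym (@adj_sym setT).
  move=> a b /existsP[i /andP[_ ab]]; rewrite !inE => ua.
  apply: connect_trans ua _; case: (eqVneq i e) => [ie|ie].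
    by move: ab; rewrite ie => /orP[]/andP[/eqP <- /eqP <-]; rewrite // S'sym.
  by apply: connect1; apply/existsP; exists i; rewrite !inE ie.
move/forallP: G_conn => /(_ u)/forallP/(_ v) uv.
by have := closed_connect closedC uv; rewrite !inE connect0.
Qed.

Lemma L_add_Ri_neq0 : connectedb S' -> L e + Ri ep1 ep2 L e != 0.
Proof. by move=> S'conn; rewrite gt_eqF // ltr_wpDr ?reff_ge0. Qed.

Hypothesis G_conn : connectedb setT.

(* Rescaling the potential of Gamma - e by L / (L + R) makes the current through e
   (R / L times the factor) and through Gamma - e (the factor) add up to 1. *)
Lemma jhat_add_edge : connectedb S' -> forall v,
  jhat setT q v p = L e / (L e + Ri ep1 ep2 L e) * jhat S' q v p.
Proof.
move=> S'conn; apply: jhatE => //.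
have gq : jhat S' q q p = 0 by exact: jhat_ground.
have gp : jhat S' q p p = Ri ep1 ep2 L e by [].
have LR_neq0 := L_add_Ri_neq0 S'conn.
apply/is_potentialE; split=> [|w]; first by rewrite gq mulr0.
rewrite net_current_add_edge net_currentZ jhat_current //.
case: (eqVneq w p) => [->|wp].
  case: (eqVneq p q) => [pq|pq]; last by rewrite gq gp /=; field; rewrite LR_neq0 L_neq0.
  by rewrite -pq; ring.
case: (eqVneq w q) => [->|wq]; first by rewrite gq gp ?eqxx /=; field; rewrite LR_neq0 L_neq0.
by rewrite !(subrr, mul0r, mulr0, addr0).
Qed.

Lemma bridge_ends_disconnected : ~~ connectedb S' -> ~~ connect (adj S') q p.
Proof.
apply: contra; rewrite (sym_connect_sym (@adj_sym S')).
exact: connected_minus_edge.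
Qed.

Lemma jhat_bridge : ~~ connectedb S' -> forall v,
  jhat setT q v p = if connect (adj S') q v then 0 else L e.
Proof.
move=> S'disconn; apply: jhatE => //.
have S'sym : connect_sym (adj S') := sym_connect_sym (@adj_sym S').
have qp := bridge_ends_disconnected S'disconn.
have pq : p != q by apply: contraNneq qp => ->; rewrite connect0.
apply/is_potentialE; split=> [|w]; first by rewrite connect0.
rewrite net_current_add_edge net_current_flat ?add0r => [|i iS'].
  rewrite connect0 (negbTE qp) /=.
  have Le := L_neq0 e.
  case: (eqVneq w p) => [->|wp]; first by rewrite ?eqxx ?(negbTE pq) ?(negbTE qp) /=; field.
  case: (eqVneq w q) => [->|wq]; first by rewrite ?eqxx 1?eq_sym ?(negbTE pq) ?connect0 /=; field.
  by rewrite !(subrr, mul0r, mulr0, addr0).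
suff -> : connect (adj S') q (ep1 i) = connect (adj S') q (ep2 i) by [].
by apply: (same_connect_r S'sym); apply: connect1; apply/existsP; exists i; rewrite iS' !eqxx.
Qed.

Lemma yterm1E : yterm1 ep1 ep2 L e = reff setT p q ^+ 2 / L e.
Proof.
have Le := L_neq0 e; rewrite /yterm1 /reff.
case: ifP => S'conn; last first.
  by rewrite jhat_bridge ?S'conn // ifN ?bridge_ends_disconnected ?S'conn //; field.
rewrite jhat_add_edge // -[jhat S' q p p]/(Ri ep1 ep2 L e).
have LR_neq0 := L_add_Ri_neq0 S'conn.
by field; rewrite Le LR_neq0.
Qed.

Lemma yterm2E x : yterm2 ep1 ep2 L e x = (reff setT x p - reff setT x q) ^+ 2 / L e.
Proof.
have Le := L_neq0 e.
have -> : reff setT x p - reff setT x q = reff setT p q - 2 * jhat setT q x p.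
  rewrite jhat_reff //; ring.
rewrite /yterm2 /reff; case: ifP => S'conn; last first.
  rewrite !jhat_bridge ?S'conn // ifN ?bridge_ends_disconnected ?S'conn //.
  by case: ifP => _; field.
have swap : jhat S' p x q = Ri ep1 ep2 L e - jhat S' q x p.
  by rewrite /Ri (reffC S'conn) -(jhat_swap_reff S'conn p q x) addrK.
have LR_neq0 := L_add_Ri_neq0 S'conn.
rewrite !jhat_add_edge // -[jhat S' q p p]/(Ri ep1 ep2 L e) /Rai /Rbi swap.
by field; rewrite Le LR_neq0.
Qed.

End AddEdge.

Definition edge_weight (S : {set E}) u w : R :=
  \sum_(e in S | (ep1 e == u) && (ep2 e == w)) (L e)^-1.

Definition conductance (S : {set E}) u w : R := edge_weight S u w + edge_weight S w u.

Lemma conductanceC S u w : conductance S u w = conductance S w u.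
Proof. exact: addrC. Qed.

Lemma conductance_ge0 S u w : 0 <= conductance S u w.
Proof. by rewrite addr_ge0 // sumr_ge0 // => e _; rewrite invr_ge0 ltW. Qed.

Lemma sum_over_edges (K : V -> V -> R) :
  \sum_e K (ep1 e) (ep2 e) / L e = \sum_u \sum_w edge_weight setT u w * K u w.
Proof.
rewrite (partition_big ep1 xpredT) //=; apply: eq_bigr => u _.
rewrite (partition_big ep2 xpredT) //=; apply: eq_bigr => w _.
rewrite big_distrl /=; apply: eq_big => [e|e /andP[/eqP -> /eqP ->]].
  by rewrite inE.
by rewrite mulrC.
Qed.

Lemma net_current_conductance S f w :
  net_current S f w = \sum_u conductance S w u * (f w - f u).
Proof.
rewrite /net_current (partition_big ep2 xpredT) ?(partition_big ep1 xpredT) //=.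
rewrite -big_split; apply: eq_bigr => u _; rewrite mulrDl !big_distrl /=.
congr (_ + _); apply: eq_big => [e|e /andP[_ /eqP ->]].
- by rewrite andbA.
- by rewrite mulrC.
- by rewrite -andbA (andbC (ep2 e == w)) andbA.
- by rewrite mulrC.
Qed.

Lemma adj_conductance_gt0 S u v : adj S u v -> 0 < conductance S u v.
Proof.
have weight_gt0 e x y : e \in S -> ep1 e = x -> ep2 e = y -> 0 < edge_weight S x y.
  move=> eS <- <-; rewrite /edge_weight (bigD1 e) /=; last by rewrite eS !eqxx.
  by rewrite ltr_wpDr ?invr_gt0 // sumr_ge0 // => i _; rewrite invr_ge0 ltW.
have weight_ge0 x y : 0 <= edge_weight S x y by apply: sumr_ge0 => i _; rewrite invr_ge0 ltW.
case/existsP => e /andP[eS /orP[]/andP[/eqP e1 /eqP e2]].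
  by rewrite ltr_wpDr ?weight_ge0 // (weight_gt0 e).
by rewrite ltr_wpDl ?weight_ge0 // (weight_gt0 e).
Qed.

Lemma isolated_not_connected S x y : x != y ->
  (forall u, u != x -> conductance S x u = 0) -> ~~ connectedb S.
Proof.
move=> xy isolated; apply/negP => /forallP/(_ x)/forallP/(_ y).
have closed_x : closed (adj S) (pred1 x).
  apply: intro_closed; first exact: sym_connect_sym (@adj_sym S).
  move=> u v uv; rewrite !inE => /eqP ux; apply/negPn/negP => vx.
  by have := adj_conductance_gt0 uv; rewrite ux isolated // ltxx.
by move/(closed_connect closed_x); rewrite !inE eqxx eq_sym (negbTE xy).
Qed.

Lemma connected_neighbour S x y : connectedb S -> x != y ->
  exists2 u, u != x & conductance S x u != 0.
Proof.
move=> Sconn xy.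
have [/existsP[u /andP[ux cu]]|none] := boolP [exists u, (u != x) && (conductance S x u != 0)].
  by exists u.
suff: ~~ connectedb S by rewrite Sconn.
apply: (isolated_not_connected xy) => u ux.
by apply/eqP; apply: contraNT none => cu; apply/existsP; exists u; rewrite ux.
Qed.

Lemma yG_reff p : connectedb setT -> yG ep1 ep2 L p =
  4^-1 * \sum_e reff setT (ep1 e) (ep2 e) ^+ 2 / L e
  + 3 / 4 * \sum_e (reff setT p (ep1 e) - reff setT p (ep2 e)) ^+ 2 / L e.
Proof.
move=> G_conn; rewrite /yG.
by congr (_ * _ + _ * _); apply: eq_bigr => e _; rewrite ?yterm1E ?yterm2E.
Qed.

End Network.

Section TwoVertices.
Variables (R : realFieldType) (V E : finType) (ep1 ep2 : E -> V) (L : E -> R).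
Hypothesis L_gt0 : forall e, 0 < L e.
Variables x y : V.
Hypotheses (xy : x != y) (V_xy : forall u, (u == x) || (u == y)).

Local Notation c := (conductance ep1 ep2 L).
Local Notation reff := (reff ep1 ep2 L).

Lemma sum_two (F : V -> R) : \sum_u F u = F x + F y.
Proof.
rewrite (bigD1 x) //= (bigD1 y) 1?eq_sym //= big1 ?addr0 // => u /andP[ux uy].
by have := V_xy u; rewrite (negbTE ux) (negbTE uy).
Qed.

Lemma conductance_two_neq0 S : connectedb ep1 ep2 S -> c S x y != 0.
Proof.
move=> Sconn; have [u ux] := connected_neighbour L_gt0 Sconn xy.
by case/orP: (V_xy u) (ux) => /eqP ->; rewrite ?eqxx.
Qed.

Lemma reff_two S : connectedb ep1 ep2 S -> reff S x y = (c S x y)^-1.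
Proof.
move=> Sconn; have c_neq0 := conductance_two_neq0 Sconn.
pose f v := if v == x then (c S x y)^-1 else 0.
have f_pot : is_potential ep1 ep2 L S y x f.
  apply/is_potentialE; split=> [|w]; first by rewrite /f eq_sym (negbTE xy).
  have yx : (y == x) = false by rewrite eq_sym (negbTE xy).
  rewrite net_current_conductance sum_two /f eqxx yx.
  by case/orP: (V_xy w) => /eqP ->;
    rewrite ?eqxx ?yx ?(negbTE xy) ?(conductanceC _ _ _ _ y x) /=; field.
by rewrite /reff (jhatE L_gt0 Sconn f_pot) /f eqxx.
Qed.

Lemma sum_over_edges_two (K : V -> V -> R) :
  (forall u, K u u = 0) -> (forall u v, K u v = K v u) ->
  \sum_e K (ep1 e) (ep2 e) / L e = c setT x y * K x y.
Proof.
move=> K0 KC; rewrite sum_over_edges !sum_two !K0 (KC y x) /conductance; ring.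
Qed.

Lemma sum_pairs_two (F : V -> V -> R) :
  (forall u, F u u = 0) -> (forall u v, F u v = F v u) ->
  \sum_u \sum_v F u v = 2 * F x y.
Proof. by move=> F0 FC; rewrite !sum_two !F0 (FC y x); ring. Qed.

Lemma Kf_two_vertices : connectedb ep1 ep2 setT -> Kf ep1 ep2 L = yG ep1 ep2 L x.
Proof.
move=> G_conn; have r_self := reff_self L_gt0 G_conn; have r_sym := reffC L_gt0 G_conn.
have r_sum : \sum_u \sum_v reff setT u v = 2 * reff setT x y by apply: sum_pairs_two.
have sq_sum : \sum_e reff setT (ep1 e) (ep2 e) ^+ 2 / L e = c setT x y * reff setT x y ^+ 2.
  rewrite (sum_over_edges_two (K := fun u v => reff setT u v ^+ 2)) => [//|u|u v] /=.
  - by rewrite r_self expr0n.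
  - by rewrite r_sym.
have diff_sum : \sum_e (reff setT x (ep1 e) - reff setT x (ep2 e)) ^+ 2 / L e
    = c setT x y * reff setT x y ^+ 2.
  rewrite (sum_over_edges_two (K := fun u v => (reff setT x u - reff setT x v) ^+ 2))
    => [|u|u v] /=.
  - by rewrite r_self sub0r sqrrN.
  - by rewrite subrr expr0n.
  - by rewrite -sqrrN opprB.
have c_neq0 := conductance_two_neq0 G_conn.
rewrite /Kf yG_reff // r_sum sq_sum diff_sum reff_two //.
by field.
Qed.

End TwoVertices.

Lemma pairwise_products_gt0 (R : realDomainType) (a b d : R) : 0 <= a -> 0 <= b -> 0 <= d ->
  0 < a + b -> 0 < a + d -> 0 < b + d -> 0 < a * b + a * d + b * d.
Proof.
move=> a0 b0 d0 ab ad bd; have [a_eq0|a_gt0] : a = 0 \/ 0 < a by lra.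
  by rewrite a_eq0 !mul0r !add0r mulr_gt0 //; lra.
have bd_ge0 : 0 <= b * d by rewrite mulr_ge0.
by rewrite -mulrDr; have := mulr_gt0 a_gt0 bd; lra.
Qed.

Section ThreeVertices.
Variables (R : realFieldType) (V E : finType) (ep1 ep2 : E -> V) (L : E -> R).
Hypothesis L_gt0 : forall e, 0 < L e.

Local Notation c := (conductance ep1 ep2 L).
Local Notation reff := (reff ep1 ep2 L).

Section Enumeration.
Variables x y w : V.
Hypotheses (xy : x != y) (xw : x != w) (yw : y != w).
Hypothesis V_xyw : forall u, [|| u == x, u == y | u == w].

(* The total weight of the spanning trees, as in Kirchhoff's formula for effective resistance. *)
Local Notation D S := (c S x y * c S x w + c S x y * c S y w + c S x w * c S y w).

Lemma sum_three (F : V -> R) : \sum_u F u = F x + F y + F w.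
Proof.
rewrite (bigD1 x) //= (bigD1 y) 1?eq_sym //= (bigD1 w) /=; last first.
  by rewrite [w == y]eq_sym [w == x]eq_sym yw xw.
rewrite big1 ?addr0 ?addrA // => u /andP[/andP[ux uy] uw].
by have := V_xyw u; rewrite (negbTE ux) (negbTE uy) (negbTE uw).
Qed.

Lemma spanning_weight_gt0 S : connectedb ep1 ep2 S -> 0 < D S.
Proof.
move=> Sconn.
have out_gt0 u v1 v2 : u != v1 -> u != v2 -> (forall t, [|| t == u, t == v1 | t == v2]) ->
    0 < c S u v1 + c S u v2.
  move=> uv1 uv2 Vu; have [t tu ct] := connected_neighbour L_gt0 Sconn uv1.
  have [c1 c2] := (conductance_ge0 ep1 ep2 L_gt0 S u v1, conductance_ge0 ep1 ep2 L_gt0 S u v2).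
  case/or3P: (Vu t) tu ct => /eqP -> //; rewrite ?eqxx // => _ ct.
  - by have := c1; rewrite le0r (negbTE ct) /=; lra.
  - by have := c2; rewrite le0r (negbTE ct) /=; lra.
have perm_enum u v1 v2 : [|| x == u, x == v1 | x == v2] -> [|| y == u, y == v1 | y == v2] ->
    [|| w == u, w == v1 | w == v2] -> forall t, [|| t == u, t == v1 | t == v2].
  by move=> hx hy hw t; case/or3P: (V_xyw t) => /eqP ->.
have x_gt0 := out_gt0 x y w xy xw V_xyw.
have y_gt0 : 0 < c S x y + c S y w.
  rewrite conductanceC; apply: out_gt0 => //; first by rewrite eq_sym.
  by apply: perm_enum; rewrite !eqxx ?orbT.
have w_gt0 : 0 < c S x w + c S y w.
  rewrite conductanceC (conductanceC _ _ _ _ y); apply: out_gt0; rewrite 1?eq_sym //.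
  by apply: perm_enum; rewrite !eqxx ?orbT.
by apply: pairwise_products_gt0; rewrite ?conductance_ge0.
Qed.

Lemma reff_three S : connectedb ep1 ep2 S -> reff S x y = (c S x w + c S y w) / D S.
Proof.
move=> Sconn; have D_neq0 : D S != 0 by rewrite gt_eqF ?spanning_weight_gt0.
pose f v := if v == x then (c S x w + c S y w) / D S else if v == w then c S x w / D S else 0.
have [yx wx wy] : [/\ (y == x) = false, (w == x) = false & (w == y) = false].
  by split; apply/negbTE; rewrite eq_sym.
have f_pot : is_potential ep1 ep2 L S y x f.
  apply/is_potentialE; split=> [|t]; first by rewrite /f /= yx (negbTE yw).
  rewrite net_current_conductance sum_three /f eqxx yx wx (negbTE yw) eqxx.
  by case/or3P: (V_xyw t) => /eqP ->;
    rewrite ?eqxx ?yx ?wx ?wy ?(negbTE xy) ?(negbTE xw) ?(negbTE yw) ?(conductanceC _ _ _ _ y x)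
      ?(conductanceC _ _ _ _ w x) ?(conductanceC _ _ _ _ w y) /=; field.
by rewrite /reff (jhatE L_gt0 Sconn f_pot) /f eqxx.
Qed.

Lemma sum_pairs_three (F : V -> V -> R) :
  (forall u, F u u = 0) -> (forall u v, F u v = F v u) ->
  \sum_u \sum_v F u v = 2 * (F x y + F x w + F y w).
Proof. by move=> F0 FC; rewrite !sum_three !F0 (FC y x) (FC w x) (FC w y); ring. Qed.

Lemma sum_over_edges_three (K : V -> V -> R) :
  (forall u, K u u = 0) -> (forall u v, K u v = K v u) ->
  \sum_e K (ep1 e) (ep2 e) / L e = c setT x y * K x y + c setT x w * K x w + c setT y w * K y w.
Proof.
move=> K0 KC; rewrite sum_over_edges !sum_three !K0 (KC y x) (KC w x) (KC w y) /conductance.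
ring.
Qed.

End Enumeration.

Lemma Kf_three_vertices x y w : x != y -> x != w -> y != w ->
  (forall u, [|| u == x, u == y | u == w]) ->
  connectedb ep1 ep2 setT -> Kf ep1 ep2 L = 2 * yG ep1 ep2 L x.
Proof.
move=> xy xw yw V_xyw G_conn.
have r_self := reff_self L_gt0 G_conn; have r_sym := reffC L_gt0 G_conn.
have r_sum : \sum_u \sum_v reff setT u v
    = 2 * (reff setT x y + reff setT x w + reff setT y w) by apply: sum_pairs_three.
have sq_sum : \sum_e reff setT (ep1 e) (ep2 e) ^+ 2 / L e = c setT x y * reff setT x y ^+ 2
    + c setT x w * reff setT x w ^+ 2 + c setT y w * reff setT y w ^+ 2.
  rewrite (sum_over_edges_three xy xw yw V_xyw (K := fun u v => reff setT u v ^+ 2))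
    => [//|u|u v] /=.
  - by rewrite r_self expr0n.
  - by rewrite r_sym.
have diff_sum : \sum_e (reff setT x (ep1 e) - reff setT x (ep2 e)) ^+ 2 / L e
    = c setT x y * reff setT x y ^+ 2 + c setT x w * reff setT x w ^+ 2
      + c setT y w * (reff setT x y - reff setT x w) ^+ 2.
  rewrite (sum_over_edges_three xy xw yw V_xyw
    (K := fun u v => (reff setT x u - reff setT x v) ^+ 2)) => [|u|u v] /=.
  - by rewrite r_self !sub0r !sqrrN.
  - by rewrite subrr expr0n.
  - by rewrite -sqrrN opprB.
have enum_xwy u : [|| u == x, u == w | u == y] by case/or3P: (V_xyw u) => ->; rewrite ?orbT.
have enum_ywx u : [|| u == y, u == w | u == x] by case/or3P: (V_xyw u) => ->; rewrite ?orbT.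
have D_gt0 := spanning_weight_gt0 xy xw yw V_xyw G_conn.
rewrite /Kf yG_reff // r_sum sq_sum diff_sum (reff_three xy xw yw V_xyw) //.
have [yx wx wy] : [/\ y != x, w != x & w != y] by rewrite !(eq_sym _ x) (eq_sym w y).
rewrite (reff_three xw xy wy enum_xwy) // (reff_three yw yx wx enum_ywx) //.
rewrite ?(conductanceC _ _ _ _ w y) ?(conductanceC _ _ _ _ w x) ?(conductanceC _ _ _ _ y x).
by field; repeat (apply/andP; split); rewrite gt_eqF //; lra.
Qed.

End ThreeVertices.

Lemma card2_enum (T : finType) (p : T) : #|T| = 2 ->
  exists2 a, p != a & forall u, (u == p) || (u == a).
Proof.
move=> T2; have /cards1P[a others] : #|[set~ p]| == 1 by rewrite cardsC1 T2.
have : a \in [set~ p] by rewrite others set11.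
rewrite !inE eq_sym => pa; exists a => // u.
case: (eqVneq u p) => //= up.
have : u \in [set~ p] by rewrite !inE up.
by rewrite others inE.
Qed.

Lemma card3_enum (T : finType) (p : T) : #|T| = 3 ->
  exists a b, [/\ p != a, p != b, a != b & forall u, [|| u == p, u == a | u == b]].
Proof.
move=> T3; have /cards2P[a [b [ab others]]] : #|[set~ p]| == 2 by rewrite cardsC1 T3.
have : a \in [set~ p] by rewrite others !inE eqxx.
have : b \in [set~ p] by rewrite others !inE eqxx orbT.
rewrite !inE ![_ == p]eq_sym => pb pa; exists a, b; split=> // u.
case: (eqVneq u p) => //= up.
have : u \in [set~ p] by rewrite !inE up.
by rewrite others !inE.
Qed.

Theorem corollary3p10 (R : realFieldType) (V E : finType)
    (ep1 ep2 : E -> V) (L : E -> R) :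
  (forall e : E, 0 < L e) ->
  connectedb ep1 ep2 [set: E] ->
  (#|V| = 2%N -> forall p : V, Kf ep1 ep2 L = yG ep1 ep2 L p) /\
  (#|V| = 3%N -> forall p : V, Kf ep1 ep2 L = 2 * yG ep1 ep2 L p).
Proof.
move=> L_gt0 G_conn; split=> [V2 p|V3 p].
- have [a pa V_pa] := card2_enum p V2.
  exact: (Kf_two_vertices L_gt0 pa V_pa).
- have [a [b [pa pb ab V_pab]]] := card3_enum p V3.
  exact: (Kf_three_vertices L_gt0 pa pb ab V_pab).
Qed.
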